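(* Let $\rho:\omega_1\setminus\{0\}\to\omega_1$ be the generic regressive map and let $A\subseteq\omega_1$ be countable and $\rho$-closed. Then there exist ordinals $\beta,\gamma<\omega_1$ with $\beta,\gamma\notin A$, $\beta\neq\gamma$, $\gamma\notin\operatorname{Succ}_\rho(\beta)$, and $\operatorname{Succ}_\rho(\beta)\cap A=\varnothing$.
   Context: $\mathbb P_0$ is the forcing of finite partial regressive functions on $\omega_1$ (finite partial $p:\omega_1\setminus\{0\}\to\omega_1$ with $p(\alpha)<\alpha$); for a $V$-generic $G_0$, $\rho$ is the induced total regressive map $\omega_1\setminus\{0\}\to\omega_1$. $\operatorname{Succ}_\rho(\xi)=\{\eta<\omega_1:\rho(\eta)=\xi\}$. $A$ is $\rho$-closed if $\rho(\eta)\in A$ whenever $0\neq\eta\in A$. *)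

From Stdlib Require Import Classical.

Set Implicit Arguments.

Definition countable_set (T : Type) (A : T -> Prop) : Prop :=
  exists f : T -> nat, forall x y, A x -> A y -> f x = f y -> x = y.

(* (T, lt, z) is (isomorphic to) omega_1 with least element z = 0:
   a strict well-order, total, uncountable, all of whose proper
   initial segments are countable. *)
Record is_omega1 (T : Type) (lt : T -> T -> Prop) (z : T) : Prop := {
  om_irrefl : forall x, ~ lt x x;
  om_trans : forall x y w, lt x y -> lt y w -> lt x w;
  om_total : forall x y, lt x y \/ x = y \/ lt y x;
  om_wf : well_founded lt;
  om_zero : forall x, ~ lt x z;
  om_uncountable : ~ countable_set (fun _ : T => True);
  om_segments : forall a, countable_set (fun x => lt x a)
}.

(* rho : omega_1 \ {0} -> omega_1 regressive (value at 0 is irrelevant). *)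
Definition regressive (T : Type) (lt : T -> T -> Prop) (z : T) (rho : T -> T) :=
  forall a, a <> z -> lt (rho a) a.

Definition Succ (T : Type) (z : T) (rho : T -> T) (xi : T) : T -> Prop :=
  fun eta => eta <> z /\ rho eta = xi.

Definition rho_closed (T : Type) (z : T) (rho : T -> T) (A : T -> Prop) : Prop :=
  forall eta, eta <> z -> A eta -> A (rho eta).

(* Take gamma outside the countable set A, then beta outside the countable
   set A ∪ [0, gamma], so gamma < beta.  Regressivity gives
   rho gamma < gamma < beta, so gamma is not a successor of beta, and
   rho-closure of A forbids a successor of beta in A since beta is not in A. *)

From Stdlib Require Import Classical ClassicalEpsilon Lia.

Set Implicit Arguments.

Lemma countable_union (T : Type) (P Q : T -> Prop) :
  countable_set P -> countable_set Q -> countable_set (fun x => P x \/ Q x).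
Proof.
  intros [f Hf] [g Hg].
  exists (fun x => if excluded_middle_informative (P x) then 2 * f x else 2 * g x + 1).
  intros x y Hx Hy.
  destruct (excluded_middle_informative (P x)) as [Px | nPx];
    destruct (excluded_middle_informative (P y)) as [Py | nPy]; intro E.
  - apply Hf; auto; lia.
  - lia.
  - lia.
  - apply Hg; [destruct Hx; tauto | destruct Hy; tauto | lia].
Qed.

Lemma countable_singleton (T : Type) (a : T) : countable_set (fun x => x = a).
Proof. exists (fun _ => 0). intros x y -> -> _. reflexivity. Qed.

Section Omega1.

Variables (T : Type) (lt : T -> T -> Prop) (z : T).
Hypothesis Hom : is_omega1 lt z.

Lemma exists_not_in_countable (P : T -> Prop) :
  countable_set P -> exists x, ~ P x.
Proof.
  intros [f Hf]. apply NNPP. intro Hall.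
  apply (om_uncountable Hom). exists f. intros x y _ _.
  apply Hf; apply NNPP; intro N; apply Hall; eauto.
Qed.

Lemma countable_closed_segment (a : T) :
  countable_set (fun x => lt x a \/ x = a).
Proof. apply countable_union; [apply (om_segments Hom) | apply countable_singleton]. Qed.

Lemma lt_of_not_le (a x : T) : ~ (lt x a \/ x = a) -> lt a x.
Proof.
  intro Hx. destruct (om_total Hom a x) as [H | [-> | H]]; tauto.
Qed.

Lemma not_Succ_of_lt (rho : T -> T) (beta gamma : T) :
  regressive lt z rho -> lt gamma beta -> ~ Succ z rho beta gamma.
Proof.
  intros Hreg Hgb [Hgz Hrho].
  pose proof (Hreg gamma Hgz) as Hlt. rewrite Hrho in Hlt.
  exact (om_irrefl Hom gamma (om_trans Hom _ _ _ Hgb Hlt)).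
Qed.

End Omega1.

Lemma Succ_not_in_closed (T : Type) (z : T) (rho : T -> T) (A : T -> Prop) (beta : T) :
  rho_closed z rho A -> ~ A beta -> forall eta, Succ z rho beta eta -> ~ A eta.
Proof. intros HAcl Hb eta [Hez Hrho] Ha. apply Hb. rewrite <- Hrho. auto. Qed.

Theorem lemma2p6 (T : Type) (lt : T -> T -> Prop) (z : T)
  (Hom : is_omega1 lt z) (rho : T -> T) (Hreg : regressive lt z rho)
  (A : T -> Prop) (HAc : countable_set A) (HAcl : rho_closed z rho A) :
  exists beta gamma : T,
    ~ A beta /\ ~ A gamma /\ beta <> gamma /\
    ~ Succ z rho beta gamma /\
    (forall eta, Succ z rho beta eta -> ~ A eta).
Proof.
  destruct (exists_not_in_countable Hom HAc) as [gamma Hg].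
  destruct (exists_not_in_countable Hom
              (countable_union HAc (countable_closed_segment Hom gamma)))
    as [beta Hb].
  assert (Hgb : lt gamma beta) by (apply (lt_of_not_le Hom); tauto).
  exists beta, gamma. repeat split.
  - tauto.
  - exact Hg.
  - intros ->. tauto.
  - exact (not_Succ_of_lt Hom Hreg Hgb).
  - apply (Succ_not_in_closed HAcl). tauto.
Qed.
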